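(* In the setting of the context (with assumptions (A.1)–(A.3)), suppose the PMM generates infinite sequences $\{(u_k,v_k)\}$, $\{(z_k,w_k)\}$, $\{\gamma_k\}$, $\{\rho_k\}$; define $x_k=z_{k-1}+\lambda w_{k-1}+\lambda(Cv_k-d)$, $y_k=x_k-\lambda(w_{k-1}-Mu_k)$, and for $k\ge1$ the ergodic quantities $$\Gamma_k=\sum_{j=1}^k\rho_j\gamma_j,\quad \bar u_k=\frac1{\Gamma_k}\sum_{j=1}^k\rho_j\gamma_ju_j,\quad \bar v_k=\frac1{\Gamma_k}\sum_{j=1}^k\rho_j\gamma_jv_j,\quad \bar x_k=\frac1{\Gamma_k}\sum_{j=1}^k\rho_j\gamma_jx_j,\quad \bar y_k=\frac1{\Gamma_k}\sum_{j=1}^k\rho_j\gamma_jy_j,$$ $$\bar\epsilon_k^u=\frac1{\Gamma_k}\sum_{j=1}^k\rho_j\gamma_j\langle u_j-\bar u_k,-M^*y_j\rangle,\qquad \bar\epsilon_k^v=\frac1{\Gamma_k}\sum_{j=1}^k\rho_j\gamma_j\langle v_j-\bar v_k,-C^*x_j\rangle.$$ Then $\bar\epsilon_k^v\ge0$, $\bar\epsilon_k^u\ge0$, and $$0\in\partial_{\bar\epsilon_k^v}g(\bar v_k)+C^*\bar x_k,\qquad 0\in\partial_{\bar\epsilon_k^u}f(\bar u_k)+M^*\bar y_k.$$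
   Context: Let $f:\mathbb{R}^{m_1}\to(-\infty,\infty]$, $g:\mathbb{R}^{m_2}\to(-\infty,\infty]$ be proper closed convex, $M:\mathbb{R}^{m_1}\to\mathbb{R}^n$, $C:\mathbb{R}^{m_2}\to\mathbb{R}^n$ linear, $d\in\mathbb{R}^n$; consider $\min\{f(u)+g(v):Mu+Cv=d\}$ with Lagrangian $L(u,v,z)=f(u)+g(v)+\langle Mu+Cv-d,z\rangle$. A saddle point is $(u^*,v^*,z^* )$ with $L(u^*,v^*,z^* )$ finite and $\min_{(u,v)}L(u,v,z^* )=L(u^*,v^*,z^* )=\max_zL(u^*,v^*,z)$. $^*$ on functions denotes the Fenchel conjugate, on operators the adjoint. Standing assumptions: (A.1) $L$ has a saddle point; (A.2) $\mathrm{ri}(\mathrm{dom} f^* )\cap\mathrm{range}(M^* )\ne\emptyset$; (A.3) $\mathrm{ri}(\mathrm{dom} g^* )\cap\mathrm{range}(C^* )\ne\emptyset$. For $\epsilon\ge0$, the $\epsilon$-subdifferential is $\partial_\epsilon \theta(x)=\{s:\theta(x')\ge\theta(x)+\langle s,x'-x\rangle-\epsilon\ \forall x'\}$. PMM: given $(z_0,w_0)\in\mathbb{R}^n\times\mathbb{R}^n$, $\lambda>0$, $\bar\rho\in[0,1)$, for $k=1,2,\dots$: (1) let $v_k$ be a minimizer of $g(v)+\langle z_{k-1}+\lambda w_{k-1},Cv-d\rangle+\frac\lambda2\|Cv-d\|^2$ and $u_k$ a minimizer of $f(u)+\langle z_{k-1}+\lambda(Cv_k-d),Mu\rangle+\frac\lambda2\|Mu\|^2$;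 (2) if $\|Mu_k+Cv_k-d\|+\|Mu_k-w_{k-1}\|=0$ stop; otherwise set $\gamma_k=\dfrac{\lambda\|Cv_k-d+w_{k-1}\|^2+\lambda\langle d-Cv_k-Mu_k,w_{k-1}-Mu_k\rangle}{\|Mu_k+Cv_k-d\|^2+\lambda^2\|Mu_k-w_{k-1}\|^2}$; (3) choose $\rho_k\in[1-\bar\rho,1+\bar\rho]$ and set $z_k=z_{k-1}+\rho_k\gamma_k(Mu_k+Cv_k-d)$, $w_k=w_{k-1}-\rho_k\gamma_k\lambda(w_{k-1}-Mu_k)$. *)

(* R : realType, vectors in R^n are column vectors 'cV[R]_n,
   linear maps R^m -> R^n are matrices 'M[R]_(n,m), adjoint = transpose,
   extended-valued functions take values in \bar R (mathcomp-analysis). *)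
From HB Require Import structures.
From mathcomp Require Import all_boot all_order all_algebra.
From mathcomp Require Import all_classical all_reals all_analysis.
Set Implicit Arguments. Unset Strict Implicit. Unset Printing Implicit Defensive.
Import Order.TTheory GRing.Theory Num.Theory.
Import numFieldNormedType.Exports.
Local Open Scope classical_set_scope.
Local Open Scope ring_scope.

Section Defs.
Variable R : realType.

Definition dotp (n : nat) (x y : 'cV[R]_n) : R := \sum_(i < n) x i 0 * y i 0.

Definition enorm (n : nat) (x : 'cV[R]_n) : R := Num.sqrt (dotp x x).

Definition edom (n : nat) (f : 'cV[R]_n -> \bar R) : set 'cV[R]_n :=
  [set x | (f x < +oo)%E].

Definition proper_fun (n : nat) (f : 'cV[R]_n -> \bar R) : Prop :=
  (forall x, f x != -oo%E) /\ (exists x, (f x < +oo)%E).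

Definition convex_fun (n : nat) (f : 'cV[R]_n -> \bar R) : Prop :=
  forall x y (t : R), edom f x -> edom f y -> 0 <= t <= 1 ->
    (f (t *: x + (1 - t) *: y)%R <= t%:E * f x + (1 - t)%:E * f y)%E.

(* closed = lower semicontinuous: all sublevel sets are closed *)
Definition closed_fun (n : nat) (f : 'cV[R]_n -> \bar R) : Prop :=
  forall a : R, closed [set x | (f x <= a%:E)%E].

Definition conj_fun (n : nat) (f : 'cV[R]_n -> \bar R) (s : 'cV[R]_n) : \bar R :=
  ereal_sup [set ((dotp s x)%:E - f x)%E | x in [set: 'cV[R]_n]].

Definition aff_hull (n : nat) (S : set 'cV[R]_n) : set 'cV[R]_n :=
  [set y | exists (k : nat) (t : 'I_k -> R) (p : 'I_k -> 'cV[R]_n),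
      (forall i, S (p i)) /\ \sum_(i < k) t i = 1 /\
      y = \sum_(i < k) t i *: p i].

Definition rel_int (n : nat) (S : set 'cV[R]_n) : set 'cV[R]_n :=
  [set x | S x /\ exists e : R, 0 < e /\
      (forall y, aff_hull S y -> enorm (y - x) < e -> S y)].

Definition mx_range (m n : nat) (A : 'M[R]_(m, n)) : set 'cV[R]_m :=
  [set y | exists x : 'cV[R]_n, y = A *m x].

Definition lagr (m1 m2 n : nat) (f : 'cV[R]_m1 -> \bar R) (g : 'cV[R]_m2 -> \bar R)
  (M : 'M[R]_(n, m1)) (C : 'M[R]_(n, m2)) (d : 'cV[R]_n)
  (u : 'cV[R]_m1) (v : 'cV[R]_m2) (z : 'cV[R]_n) : \bar R :=
  (f u + g v + (dotp (M *m u + C *m v - d) z)%:E)%E.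

Definition saddle_point (m1 m2 n : nat) (f : 'cV[R]_m1 -> \bar R) (g : 'cV[R]_m2 -> \bar R)
  (M : 'M[R]_(n, m1)) (C : 'M[R]_(n, m2)) (d : 'cV[R]_n)
  (us : 'cV[R]_m1) (vs : 'cV[R]_m2) (zs : 'cV[R]_n) : Prop :=
  lagr f g M C d us vs zs \is a fin_num /\
  (forall u v, (lagr f g M C d us vs zs <= lagr f g M C d u v zs)%E) /\
  (forall z, (lagr f g M C d us vs z <= lagr f g M C d us vs zs)%E).

Definition eps_subdiff (n : nat) (th : 'cV[R]_n -> \bar R) (eps : R) (x : 'cV[R]_n)
  (s : 'cV[R]_n) : Prop :=
  forall x', (th x' >= th x + (dotp s (x' - x))%:E - eps%:E)%E.

(* The PMM iteration: sequences indexed by nat, (z 0, w 0) the initial point;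
   for every k >= 1 the steps (1)-(3) hold and the stopping test fails. *)
Definition pmm_seq (m1 m2 n : nat) (f : 'cV[R]_m1 -> \bar R) (g : 'cV[R]_m2 -> \bar R)
  (M : 'M[R]_(n, m1)) (C : 'M[R]_(n, m2)) (d : 'cV[R]_n) (lam rhobar : R)
  (u : nat -> 'cV[R]_m1) (v : nat -> 'cV[R]_m2) (z w : nat -> 'cV[R]_n)
  (gam rho : nat -> R) : Prop :=
  forall k : nat, (1 <= k)%N ->
    (forall v' : 'cV[R]_m2,
       (g (v k) + (dotp (z k.-1 + lam *: w k.-1) (C *m v k - d)
                    + lam / 2 * dotp (C *m v k - d) (C *m v k - d))%:E
        <= g v' + (dotp (z k.-1 + lam *: w k.-1) (C *m v' - d)
                    + lam / 2 * dotp (C *m v' - d) (C *m v' - d))%:E)%E) /\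
    (forall u' : 'cV[R]_m1,
       (f (u k) + (dotp (z k.-1 + lam *: (C *m v k - d)) (M *m u k)
                    + lam / 2 * dotp (M *m u k) (M *m u k))%:E
        <= f u' + (dotp (z k.-1 + lam *: (C *m v k - d)) (M *m u')
                    + lam / 2 * dotp (M *m u') (M *m u'))%:E)%E) /\
    enorm (M *m u k + C *m v k - d) + enorm (M *m u k - w k.-1) != 0 /\
    gam k = (lam * enorm (C *m v k - d + w k.-1) ^+ 2
             + lam * dotp (d - C *m v k - M *m u k) (w k.-1 - M *m u k))
            / (enorm (M *m u k + C *m v k - d) ^+ 2
               + lam ^+ 2 * enorm (M *m u k - w k.-1) ^+ 2) /\
    1 - rhobar <= rho k <= 1 + rhobar /\
    z k = z k.-1 + (rho k * gam k) *: (M *m u k + C *m v k - d) /\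
    w k = w k.-1 - (rho k * gam k * lam) *: (w k.-1 - M *m u k).

Definition pmm_x (m2 n : nat) (C : 'M[R]_(n, m2)) (d : 'cV[R]_n) (lam : R)
  (v : nat -> 'cV[R]_m2) (z w : nat -> 'cV[R]_n) (k : nat) : 'cV[R]_n :=
  z k.-1 + lam *: w k.-1 + lam *: (C *m v k - d).

Definition pmm_y (m1 m2 n : nat) (M : 'M[R]_(n, m1)) (C : 'M[R]_(n, m2)) (d : 'cV[R]_n)
  (lam : R) (u : nat -> 'cV[R]_m1) (v : nat -> 'cV[R]_m2) (z w : nat -> 'cV[R]_n)
  (k : nat) : 'cV[R]_n :=
  pmm_x C d lam v z w k - lam *: (w k.-1 - M *m u k).

Definition Gam (gam rho : nat -> R) (k : nat) : R :=
  \sum_(1 <= j < k.+1) rho j * gam j.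

Definition erg (m : nat) (gam rho : nat -> R) (a : nat -> 'cV[R]_m) (k : nat) : 'cV[R]_m :=
  (Gam gam rho k)^-1 *: \sum_(1 <= j < k.+1) (rho j * gam j) *: a j.

Definition erg_eps (m n : nat) (gam rho : nat -> R) (A : 'M[R]_(n, m))
  (a : nat -> 'cV[R]_m) (b : nat -> 'cV[R]_n) (k : nat) : R :=
  (Gam gam rho k)^-1 * \sum_(1 <= j < k.+1)
     rho j * gam j * dotp (a j - erg gam rho a k) (- (A^T *m b j)).

End Defs.

(* The optimality conditions of the two PMM subproblems say that -C^T x_j is a
   subgradient of g at v_j and -M^T y_j one of f at u_j.  Averaging these
   subgradient inequalities with the positive weights rho_j gamma_j, and bounding
   the averaged function values from below by Jensen's inequality, gives an
   epsilon-subgradient inequality at the ergodic means whose error is exactly the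
   weighted average of <a_j - abar_k, s_j>; testing it at abar_k shows that this
   error is nonnegative.  Only properness and convexity of f and g enter: closedness
   and (A.1)-(A.3) are needed for convergence of the method, not for this
   statement. *)

From HB Require Import structures.
From mathcomp Require Import all_boot all_order all_algebra.
From mathcomp Require Import all_classical all_reals all_analysis.
From mathcomp Require Import ring lra.
Import Order.TTheory GRing.Theory Num.Theory.
Import numFieldNormedType.Exports.
Local Open Scope classical_set_scope.
Local Open Scope ring_scope.

Set Implicit Arguments.
Unset Strict Implicit.

Section InnerProduct.
Variables (R : realType) (n : nat).
Implicit Types (x y z : 'cV[R]_n) (a : R).

Lemma dotpC x y : dotp x y = dotp y x.
Proof. by apply: eq_bigr => i _; rewrite mulrC. Qed.

Lemma dotpDl x y z : dotp (x + y) z = dotp x z + dotp y z.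
Proof. by rewrite /dotp -big_split; apply: eq_bigr => i _; rewrite mxE mulrDl. Qed.

Lemma dotpDr x y z : dotp z (x + y) = dotp z x + dotp z y.
Proof. by rewrite dotpC dotpDl !(dotpC z). Qed.

Lemma dotpZl a x y : dotp (a *: x) y = a * dotp x y.
Proof. by rewrite /dotp mulr_sumr; apply: eq_bigr => i _; rewrite mxE mulrA. Qed.

Lemma dotpZr a x y : dotp y (a *: x) = a * dotp y x.
Proof. by rewrite dotpC dotpZl dotpC. Qed.

Lemma dotpNl x y : dotp (- x) y = - dotp x y.
Proof. by rewrite -scaleN1r dotpZl mulN1r. Qed.

Lemma dotpNr x y : dotp y (- x) = - dotp y x.
Proof. by rewrite dotpC dotpNl dotpC. Qed.

Lemma dotpBr x y z : dotp z (x - y) = dotp z x - dotp z y.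
Proof. by rewrite dotpDr dotpNr. Qed.

Lemma dotp0r x : dotp x 0 = 0.
Proof. by rewrite -(scale0r 0) dotpZr mul0r. Qed.

Lemma dotp_suml (I : Type) (r : seq I) (P : pred I) (F : I -> 'cV[R]_n) y :
  dotp (\sum_(i <- r | P i) F i) y = \sum_(i <- r | P i) dotp (F i) y.
Proof.
elim/big_rec2: _ => [|i s1 s2 _ <-]; last exact: dotpDl.
by rewrite dotpC dotp0r.
Qed.

Lemma dotp_trmx m (A : 'M[R]_(n, m)) x (y : 'cV[R]_m) :
  dotp (A^T *m x) y = dotp x (A *m y).
Proof.
have dotp_mx k (s t : 'cV[R]_k) : dotp s t = (s^T *m t) 0 0.
  by rewrite mxE; apply: eq_bigr => i _; rewrite mxE.
by rewrite !dotp_mx trmx_mul trmxK mulmxA.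
Qed.

Lemma dotp_ge0 x : 0 <= dotp x x.
Proof. by apply: sumr_ge0 => i _; rewrite -expr2 sqr_ge0. Qed.

Lemma enorm_sqr x : enorm x ^+ 2 = dotp x x.
Proof. by rewrite sqr_sqrtr // dotp_ge0. Qed.

Lemma enormN x : enorm (- x) = enorm x.
Proof. by rewrite /enorm dotpNl dotpNr opprK. Qed.

Lemma enorm_eq0 x : (enorm x == 0) = (dotp x x == 0).
Proof. by rewrite sqrtr_eq0 le_eqVlt ltNge dotp_ge0 orbF. Qed.

Lemma penalty_shift (a p e : 'cV[R]_n) (lam t : R) :
  dotp a (p + t *: e) + lam / 2 * dotp (p + t *: e) (p + t *: e) =
  dotp a p + lam / 2 * dotp p p + t * dotp (a + lam *: p) e
  + t ^+ 2 * (lam / 2 * dotp e e).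
Proof. by rewrite !dotpDl !dotpDr !dotpZl !dotpZr (dotpC e p); field. Qed.

End InnerProduct.

Section Subgradients.
Variables (R : realType) (m : nat).
Implicit Types (h : 'cV[R]_m -> \bar R) (x y s : 'cV[R]_m).

Lemma fin_num_le_EFin (e : \bar R) (c : R) :
  e != -oo%E -> (e <= c%:E)%E -> e \is a fin_num.
Proof. by case: e. Qed.

Lemma eps_subdiffP h eps x s r :
  (forall y, h y != -oo%E) -> h x = r%:E ->
  eps_subdiff h eps x s <->
  (forall y r', h y = r'%:E -> r + dotp s (y - x) - eps <= r').
Proof.
move=> hninf hx; split=> [hs y r' hy | hs y].
  by have := hs y; rewrite hx hy -!EFinD lee_fin.
case hy: (h y) => [r'| |]; last by have := hninf y; rewrite hy.
  by rewrite hx -!EFinD lee_fin; apply: hs.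
by rewrite leey.
Qed.

Lemma eps_subdiff_ge0 h eps x s :
  h x \is a fin_num -> eps_subdiff h eps x s -> 0 <= eps.
Proof.
move=> /fineK hx /(_ x); rewrite subrr dotp0r -hx -!EFinD lee_fin; lra.
Qed.

Lemma convex_funEFin h x y rx ry t :
  convex_fun h -> h x = rx%:E -> h y = ry%:E -> 0 <= t <= 1 ->
  (h (t *: x + (1 - t) *: y)%R <= (t * rx + (1 - t) * ry)%:E)%E.
Proof.
move=> hconv hx hy ht; rewrite EFinD !EFinM -hx -hy.
by apply: hconv => //; rewrite /edom /= ?hx ?hy ltry.
Qed.

Lemma le0_of_forall_le_mul (a c : R) :
  (forall t, 0 < t <= 1 -> a <= t * c) -> a <= 0.
Proof.
move=> hac; rewrite leNgt; apply/negP => a_gt0.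
have hc := normr_ge0 c; have := ler_norm c.
have ht : 0 < a / (a + `|c|) <= 1.
  by rewrite divr_gt0 ?ler_pdivrMr ?mul1r; lra.
have := hac _ ht; rewrite mulrAC ler_pdivlMr; last lra.
nra.
Qed.

(* Compare x0 with x0 + t (x - x0): by convexity h grows at most linearly in t,
   while the penalty changes by t L + O(t^2); now let t tend to 0. *)
Lemma argmin_penalty_subgrad n h (A : 'M[R]_(n, m)) (a b : 'cV[R]_n) (lam : R) x0 :
  proper_fun h -> convex_fun h ->
  (forall x,
    (h x0 + (dotp a (A *m x0 - b) + lam / 2 * dotp (A *m x0 - b) (A *m x0 - b))%:E
     <= h x + (dotp a (A *m x - b) + lam / 2 * dotp (A *m x - b) (A *m x - b))%:E)%E) ->
  h x0 \is a fin_num /\ eps_subdiff h 0 x0 (- (A^T *m (a + lam *: (A *m x0 - b)))).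
Proof.
move=> [hninf [xf hxf]] hconv hmin.
have hx0 : h x0 \is a fin_num.
  move: (hmin xf) (hninf x0) hxf; rewrite fin_numE.
  by case: (h x0) => [r| |] //=; case: (h xf).
split=> //; set r0 := fine (h x0); set p := A *m x0 - b.
apply/(eps_subdiffP _ _ hninf (esym (fineK hx0))) => x r hx.
rewrite dotpNl dotp_trmx subr0 -/r0.
set e := A *m (x - x0); set L := dotp (a + lam *: p) e.
suff : r0 - L - r <= 0 by lra.
apply: (@le0_of_forall_le_mul _ (lam / 2 * dotp e e)) => t /andP[t_gt0 t_le1].
set xt := t *: x + (1 - t) *: x0.
have ht : 0 <= t <= 1 by rewrite ltW.
have hxt_le := convex_funEFin hconv hx (esym (fineK hx0)) ht.
have hxt := fineK (fin_num_le_EFin (hninf xt) hxt_le).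
rewrite -hxt lee_fin -/r0 in hxt_le; set rt := fine (h xt) in hxt hxt_le.
have hAxt : A *m xt - b = p + t *: e.
  rewrite /xt /e /p mulmxDr mulmxBr -!scalemxAr.
  by move: (A *m x) (A *m x0) => y y0; apply/matrixP => i j; rewrite !mxE; ring.
have := hmin xt; rewrite -hxt -(fineK hx0) -!EFinD lee_fin hAxt penalty_shift -/L -/p -/r0.
move=> hopt; rewrite -(ler_pM2l t_gt0); lra.
Qed.

End Subgradients.

Section ErgodicAverages.
Variables (R : realType) (gam rho : nat -> R).
Hypothesis weight_gt0 : forall j, (0 < j)%N -> 0 < rho j * gam j.

Lemma GamS k : Gam gam rho k.+1 = Gam gam rho k + rho k.+1 * gam k.+1.
Proof. by rewrite /Gam big_nat_recr. Qed.

Lemma Gam_gt0 k : (0 < k)%N -> 0 < Gam gam rho k.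
Proof.
case: k => // k _; elim: k => [|k IH]; rewrite GamS.
  by rewrite [Gam _ _ 0]big_geq // add0r weight_gt0.
by rewrite addr_gt0 ?weight_gt0.
Qed.

Lemma weighted_mean_le (c : nat -> R) r k :
  (0 < k)%N -> (forall j, (0 < j <= k)%N -> c j <= r) ->
  (Gam gam rho k)^-1 * \sum_(1 <= j < k.+1) rho j * gam j * c j <= r.
Proof.
move=> k_gt0 hc; rewrite ler_pdivrMl ?Gam_gt0 // /Gam mulr_suml.
rewrite big_nat_cond [X in _ <= X]big_nat_cond; apply: ler_sum => j /andP[hj _].
by rewrite ler_wpM2l ?hc // ltW ?weight_gt0 //; case/andP: hj.
Qed.

Lemma erg1 m (a : nat -> 'cV[R]_m) : erg gam rho a 1 = a 1%N.
Proof.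
by rewrite /erg /Gam !big_nat1 scalerA mulVf ?scale1r // gt_eqF ?weight_gt0.
Qed.

Lemma ergS m (a : nat -> 'cV[R]_m) k : (0 < k)%N ->
  erg gam rho a k.+1 = (Gam gam rho k / Gam gam rho k.+1) *: erg gam rho a k
                       + (1 - Gam gam rho k / Gam gam rho k.+1) *: a k.+1.
Proof.
move=> k_gt0; have G_gt0 := Gam_gt0 k_gt0.
have al_gt0 := weight_gt0 (ltn0Sn k).
rewrite /erg big_nat_recr //= GamS.
move: (\sum_(1 <= j < k.+1) _) => P; apply/matrixP => i j; rewrite !mxE.
by field; rewrite !gt_eqF ?addr_gt0.
Qed.

Lemma erg_jensen m (h : 'cV[R]_m -> \bar R) (a : nat -> 'cV[R]_m) (r : nat -> R) k :
  convex_fun h -> (forall x, h x != -oo%E) ->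
  (forall j, (0 < j)%N -> h (a j) = (r j)%:E) -> (0 < k)%N ->
  (h (erg gam rho a k)
   <= ((Gam gam rho k)^-1 * \sum_(1 <= j < k.+1) rho j * gam j * r j)%:E)%E.
Proof.
move=> hconv hninf ha; case: k => // k _; elim: k => [|k IH].
  rewrite erg1 ha // /Gam !big_nat1 mulrA mulVf ?mul1r //.
  by rewrite gt_eqF ?weight_gt0.
have G_gt0 := Gam_gt0 (ltn0Sn k); have al_gt0 := weight_gt0 (ltn0Sn k.+1).
rewrite ergS // big_nat_recr //= (GamS k.+1).
set G := Gam gam rho k.+1 in G_gt0 *; set al := rho k.+2 * gam k.+2 in al_gt0 *.
set S := \sum_(1 <= j < k.+2) _ in IH *.
have hxb := fineK (fin_num_le_EFin (hninf _) IH).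
rewrite -hxb lee_fin in IH; set rx := fine _ in hxb IH.
have ht : 0 <= G / (G + al) <= 1.
  by rewrite divr_ge0 ?ler_pdivrMr ?mul1r ?lerDl ?ltW ?addr_gt0.
apply: le_trans (convex_funEFin hconv (esym hxb) (ha _ (ltn0Sn k.+1)) ht) _.
rewrite lee_fin.
have -> : (G + al)^-1 * (S + al * r k.+2)
          = G / (G + al) * (G^-1 * S) + (1 - G / (G + al)) * r k.+2.
  by field; rewrite !gt_eqF ?addr_gt0.
by rewrite lerD2r ler_wpM2l //; case/andP: ht.
Qed.

Lemma erg_eps_shift m n (A : 'M[R]_(n, m)) a b k (x : 'cV[R]_m) :
  dotp (- (A^T *m erg gam rho b k)) (x - erg gam rho a k) - erg_eps gam rho A a b k
  = (Gam gam rho k)^-1 *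
    \sum_(1 <= j < k.+1) rho j * gam j * dotp (- (A^T *m b j)) (x - a j).
Proof.
rewrite /erg_eps; set ab := erg gam rho a k.
rewrite dotpNl dotp_trmx {1}/erg dotpZl dotp_suml -mulrN -mulrBr -sumrN -sumrB.
congr (_ * _); apply: eq_bigr => j _.
rewrite dotpZl (dotpC (a j - ab)) !dotpNl !dotp_trmx !mulmxBr !dotpBr; ring.
Qed.

Lemma erg_eps_subdiff m n (h : 'cV[R]_m -> \bar R) (A : 'M[R]_(n, m)) a b k :
  convex_fun h -> (forall x, h x != -oo%E) -> (0 < k)%N ->
  (forall j, (0 < j)%N ->
     h (a j) \is a fin_num /\ eps_subdiff h 0 (a j) (- (A^T *m b j))) ->
  h (erg gam rho a k) \is a fin_num /\
  eps_subdiff h (erg_eps gam rho A a b k) (erg gam rho a k)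
    (- (A^T *m erg gam rho b k)).
Proof.
move=> hconv hninf k_gt0 hsub.
have ha j : (0 < j)%N -> h (a j) = (fine (h (a j)))%:E.
  by move=> /hsub[/fineK].
have hJ := erg_jensen hconv hninf ha k_gt0.
have hab := fin_num_le_EFin (hninf _) hJ.
split=> //; rewrite -(fineK hab) lee_fin in hJ.
apply/(eps_subdiffP _ _ hninf (esym (fineK hab))) => x r hx.
rewrite -addrA erg_eps_shift; apply: le_trans (lerD hJ (lexx _)) _.
rewrite -mulrDr -big_split /=; under eq_bigr do rewrite -mulrDr.
apply: weighted_mean_le => // j /andP[j_gt0 _].
have [_ /(eps_subdiffP _ _ hninf (ha j j_gt0))] := hsub j j_gt0.
by move=> /(_ x r hx); rewrite subr0.
Qed.

End ErgodicAverages.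

Section PMM.
Variable R : realType.

(* The numerator is lam (|P|^2 + <P, Q> + |Q|^2) >= lam (|P|^2 + |Q|^2) / 2. *)
Lemma stepsize_gt0 n (P Q : 'cV[R]_n) (lam : R) :
  0 < lam -> enorm P + enorm Q != 0 ->
  0 < (lam * enorm (P + Q) ^+ 2 + lam * dotp (- P) Q)
      / (enorm P ^+ 2 + lam ^+ 2 * enorm Q ^+ 2).
Proof.
move=> lam_gt0 hPQ.
have hP := dotp_ge0 P; have hQ := dotp_ge0 Q; have hPQ2 := dotp_ge0 (P + Q).
have pq_gt0 : 0 < dotp P P + dotp Q Q.
  rewrite lt_def addr_ge0 // andbT; apply: contraNneq hPQ => /eqP.
  by rewrite paddr_eq0 // -!enorm_eq0 => /andP[/eqP-> /eqP->]; rewrite addr0.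
rewrite !enorm_sqr dotpNl; rewrite !dotpDl !dotpDr (dotpC Q P) in hPQ2 *.
have lam2_gt0 : 0 < lam ^+ 2 by rewrite exprn_gt0.
apply: divr_gt0; first by nra.
have [P0|P_neq0] := eqVneq (dotp P P) 0.
  by rewrite P0 add0r mulr_gt0 //; lra.
have : 0 <= lam ^+ 2 * dotp Q Q by rewrite mulr_ge0 // ltW.
have : 0 < dotp P P by rewrite lt_def P_neq0.
lra.
Qed.

Variables (m1 m2 n : nat) (f : 'cV[R]_m1 -> \bar R) (g : 'cV[R]_m2 -> \bar R).
Variables (M : 'M[R]_(n, m1)) (C : 'M[R]_(n, m2)) (d : 'cV[R]_n) (lam rhobar : R).
Variables (u : nat -> 'cV[R]_m1) (v : nat -> 'cV[R]_m2) (z w : nat -> 'cV[R]_n).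
Variables (gam rho : nat -> R).
Hypothesis hpmm : pmm_seq f g M C d lam rhobar u v z w gam rho.

Lemma pmm_weight_gt0 :
  0 < lam -> 0 <= rhobar < 1 -> forall j, (0 < j)%N -> 0 < rho j * gam j.
Proof.
move=> lam_gt0 /andP[_ rhobar_lt1] j /hpmm[_ [_ [hstop [-> [/andP[rho_ge _] _]]]]].
rewrite mulr_gt0 //; first by apply: lt_le_trans rho_ge; lra.
have -> : C *m v j - d + w j.-1 = (M *m u j + C *m v j - d) + (w j.-1 - M *m u j).
  by apply/matrixP => i l; rewrite !mxE; ring.
have -> : d - C *m v j - M *m u j = - (M *m u j + C *m v j - d).
  by apply/matrixP => i l; rewrite !mxE; ring.
by rewrite -(opprB (w j.-1)) enormN in hstop *; apply: stepsize_gt0.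
Qed.

Lemma pmm_subgrad_g : proper_fun g -> convex_fun g -> forall j, (0 < j)%N ->
  g (v j) \is a fin_num /\ eps_subdiff g 0 (v j) (- (C^T *m pmm_x C d lam v z w j)).
Proof. by move=> gp gc j /hpmm[hv _]; apply: argmin_penalty_subgrad. Qed.

Lemma pmm_subgrad_f : proper_fun f -> convex_fun f -> forall j, (0 < j)%N ->
  f (u j) \is a fin_num /\
  eps_subdiff f 0 (u j) (- (M^T *m pmm_y M C d lam u v z w j)).
Proof.
move=> fp fc j /hpmm[_ [hu _]].
have -> : pmm_y M C d lam u v z w j
          = z j.-1 + lam *: (C *m v j - d) + lam *: (M *m u j - 0).
  by rewrite /pmm_y /pmm_x; apply/matrixP => i l; rewrite !mxE; ring.
by apply: argmin_penalty_subgrad => // u'; rewrite !subr0; apply: hu.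
Qed.

End PMM.

Theorem mainTheorem6 (R : realType) (m1 m2 n : nat)
  (f : 'cV[R]_m1 -> \bar R) (g : 'cV[R]_m2 -> \bar R)
  (M : 'M[R]_(n, m1)) (C : 'M[R]_(n, m2)) (d : 'cV[R]_n)
  (hf : proper_fun f /\ closed_fun f /\ convex_fun f)
  (hg : proper_fun g /\ closed_fun g /\ convex_fun g)
  (A1 : exists us vs zs, saddle_point f g M C d us vs zs)
  (A2 : exists s, rel_int (edom (conj_fun f)) s /\ mx_range M^T s)
  (A3 : exists s, rel_int (edom (conj_fun g)) s /\ mx_range C^T s)
  (lam rhobar : R) (hlam : 0 < lam) (hrho : 0 <= rhobar < 1)
  (u : nat -> 'cV[R]_m1) (v : nat -> 'cV[R]_m2) (z w : nat -> 'cV[R]_n)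
  (gam rho : nat -> R)
  (hpmm : pmm_seq f g M C d lam rhobar u v z w gam rho) :
  let x := pmm_x C d lam v z w in
  let y := pmm_y M C d lam u v z w in
  forall k : nat, (1 <= k)%N ->
    let ubar := erg gam rho u k in
    let vbar := erg gam rho v k in
    let xbar := erg gam rho x k in
    let ybar := erg gam rho y k in
    let epsu := erg_eps gam rho M u y k in
    let epsv := erg_eps gam rho C v x k in
    0 <= epsv /\ 0 <= epsu /\
    (exists s, eps_subdiff g epsv vbar s /\ 0 = s + C^T *m xbar) /\
    (exists s, eps_subdiff f epsu ubar s /\ 0 = s + M^T *m ybar).
Proof.
move=> x y k k_gt0 ubar vbar xbar ybar epsu epsv.
have [[fp [_ fc]] [gp [_ gc]]] := (hf, hg).
have wpos := pmm_weight_gt0 hpmm hlam hrho.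
have [gfin gsub] := erg_eps_subdiff wpos gc gp.1 k_gt0 (pmm_subgrad_g hpmm gp gc).
have [ffin fsub] := erg_eps_subdiff wpos fc fp.1 k_gt0 (pmm_subgrad_f hpmm fp fc).
split; first exact: eps_subdiff_ge0 gfin gsub.
split; first exact: eps_subdiff_ge0 ffin fsub.
by split; [exists (- (C^T *m xbar)) | exists (- (M^T *m ybar))]; rewrite addNr.
Qed.
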